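(* Let $(X,\delta)$ be a diversity with $|X|=n$. The following are equivalent: (i) $(X,\delta)$ is $L_1$-embeddable; (ii) $(X,\delta)$ is $\ell_1^m$-embeddable for some $m\le\binom{n}{\lfloor n/2\rfloor}$; (iii) $\delta$ is a non-negative linear combination of cut diversities $\delta_U$, $U\subseteq X$.
   Context: A diversity on a set $X$ is a function $\delta$ from finite subsets of $X$ to $\mathbb{R}$ with $\delta(A)\ge 0$, $\delta(A)=0$ whenever $|A|\le 1$ (values $0$ on larger sets are allowed), and $\delta(A\cup B)+\delta(B\cup C)\ge\delta(A\cup C)$ for all finite $A,B,C$ with $B\neq\emptyset$. For a measure space $(\Omega,\mathcal{A},\mu)$, the $L_1$ diversity is $(L_1(\Omega,\mu),\delta_1)$ with $\delta_1(F)=\int_\Omega\max\{|f(\omega)-g(\omega)|:f,g\in F\}\,d\mu(\omega)$ for finite $F$; $(X,\delta)$ is $L_1$-embeddable if there is a map $\phi$ into some $L_1$ diversity with $\delta_1(\phi(A))=\delta(A)$ for all $A$. The $\ell_1^m$ diversity is $(\mathbb{R}^m,\delta_1)$ with $\delta_1(A)=\sum_{i=1}^m\max\{|a_i-b_i|:a,b\in A\}$, and $\ell_1^m$-embeddable means there is $\phi:X\to\mathbb{R}^m$ with $\delta_1(\phi(A))=\delta(A)$ for all $A$. For $U\subseteq X$ the cut diversity is $\delta_U(A)=1$ if $A\cap U$ and $A\setminus U$ are both nonempty, and $0$ otherwise. *)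

From HB Require Import structures.
From mathcomp Require Import all_boot all_order all_algebra.
From mathcomp Require Import all_classical all_reals all_analysis.
Set Implicit Arguments. Unset Strict Implicit. Unset Printing Implicit Defensive.
Import Order.TTheory GRing.Theory Num.Theory.
Local Open Scope ring_scope.

Definition diversity (R : realType) (X : finType) (delta : {set X} -> R) : Prop :=
  [/\ forall A : {set X}, 0 <= delta A,
      forall A : {set X}, (#|A| <= 1)%N -> delta A = 0
    & forall A B C : {set X}, B != finset.set0 -> delta (A :|: C) <= delta (A :|: B) + delta (B :|: C)].

Definition diam (R : realType) (X : finType) (f : X -> R) (A : {set X}) : R :=
  \big[Num.max/0]_(a in A) \big[Num.max/0]_(b in A) `|f a - f b|.

Definition L1_embeddable (R : realType) (X : finType) (delta : {set X} -> R) : Prop :=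
  exists (d : measure_display) (T : measurableType d)
         (mu : {measure set T -> \bar R}) (phi : X -> T -> R),
    (forall x, mu.-integrable setT (fun w => (phi x w)%:E)) /\
    (forall A : {set X},
        (delta A)%:E = (\int[mu]_(w in setT) (diam (fun x => phi x w) A)%:E)%E).

Definition l1m_embeddable (R : realType) (X : finType) (m : nat) (delta : {set X} -> R) : Prop :=
  exists phi : X -> 'I_m -> R,
    forall A : {set X}, delta A = \sum_(i < m) diam (fun x => phi x i) A.

Definition cut_div (R : realType) (X : finType) (U A : {set X}) : R :=
  if (A :&: U != finset.set0) && (A :\: U != finset.set0) then 1 else 0.

From HB Require Import structures.
From mathcomp Require Import all_boot all_order all_algebra.
From mathcomp Require Import all_classical all_reals all_analysis measurable_realfun.
From mathcomp Require Import ring lra zify.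

(* For a single coordinate [f : X -> R], [diam f] is the nonnegative
   combination of the cuts at the level sets of [f], weighted by the gaps
   between consecutive values of [f].  Integrating these weights turns an
   [L_1] embedding into a cut decomposition.  Conversely, the diameter of a
   weighted sum of indicators of a chain of sets is the same weighted sum of
   their cuts, so a cut decomposition is realised in [l_1^m] with one
   coordinate per chain; de Bruijn's symmetric chain decomposition of the
   subsets of [X] uses [C(n, n/2)] chains.  Finally [l_1^m] is [L_1] of the
   counting measure on [m] points. *)

Set Implicit Arguments.
Unset Strict Implicit.
Unset Printing Implicit Defensive.
Import Order.TTheory GRing.Theory Num.Theory.
Local Open Scope ring_scope.
Local Notation set0 := finset.set0.

Section Diameter.
Variables (R : realType) (X : finType).
Implicit Types (f g h : X -> R) (A U V : {set X}).

Lemma diam_set0 f : diam f set0 = 0.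
Proof. by rewrite /diam big_pred0 // => x; rewrite inE. Qed.

Lemma diam_ge0 f A : 0 <= diam f A.
Proof. exact: bigmax_ge_id. Qed.

Lemma diam_eq_range f A a b : a \in A -> b \in A ->
  (forall x, x \in A -> f b <= f x <= f a) -> diam f A = f a - f b.
Proof.
move=> aA bA fAab; have /andP[_ fba] := fAab b bA.
apply/le_anti/andP; split.
- apply: bigmax_le => [|x xA]; first by rewrite subr_ge0.
  apply: bigmax_le => [|y yA]; first by rewrite subr_ge0.
  have /andP[? ?] := fAab x xA; have /andP[? ?] := fAab y yA.
  rewrite ler_norml; apply/andP; split; lra.
- by apply: (bigmax_sup a) => //; apply: (bigmax_sup b) => //; exact: ler_norm.
Qed.

Lemma eq_in_diam f g A : {in A, f =1 g} -> diam f A = diam g A.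
Proof. by move=> fg; apply: eq_bigr => a aA; apply: eq_bigr => b bA; rewrite !fg. Qed.

Lemma diam_const f A c : {in A, forall x, f x = c} -> diam f A = 0.
Proof.
move=> fc; have [->|[a aA]] := set_0Vmem A; first exact: diam_set0.
by rewrite (@diam_eq_range f A a a) ?subrr // => x xA; rewrite !fc ?lexx.
Qed.

Lemma diam_addr f c A : diam (fun x => f x + c) A = diam f A.
Proof. by apply: eq_bigr => a _; apply: eq_bigr => b _; congr `|_|; ring. Qed.

Lemma exists_argmax f A : A != set0 ->
  exists2 a, a \in A & forall x, x \in A -> f x <= f a.
Proof.
by case/set0Pn => a0 a0A; case: (@arg_maxP _ _ _ a0 (mem A) f a0A) => a; exists a.
Qed.

Lemma exists_argmin f A : A != set0 ->
  exists2 a, a \in A & forall x, x \in A -> f a <= f x.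
Proof.
by case/set0Pn => a0 a0A; case: (@arg_minP _ _ _ a0 (mem A) f a0A) => a; exists a.
Qed.

Lemma diam_add_cut l h V A : 0 <= l -> (forall x y, x \in V -> h y <= h x) ->
  diam (fun x => l * (x \in V)%:R + h x) A = l * cut_div R V A + diam h A.
Proof.
move=> l0 hV; rewrite /cut_div.
have [AV0|[a aAV]] := set_0Vmem (A :&: V).
  rewrite AV0 eqxx /= mulr0 add0r; apply: eq_in_diam => x xA.
  suff /negbTE-> : x \notin V by rewrite mulr0 add0r.
  by apply/negP => xV; move/setP/(_ x): AV0; rewrite !inE xA xV.
have [AV1|[b0 b0AV]] := set_0Vmem (A :\: V).
  rewrite AV1 eqxx andbF mulr0 add0r -(diam_addr h l).
  apply: eq_in_diam => x xA; suff -> : x \in V by rewrite mulr1 addrC.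
  by apply/negPn/negP => xV; move/setP/(_ x): AV1; rewrite !inE xA xV.
have AVn0 : A :&: V != set0 by apply/set0Pn; exists a.
have ADVn0 : A :\: V != set0 by apply/set0Pn; exists b0.
rewrite AVn0 ADVn0 /=; have [b bAV bmin] := @exists_argmin h _ ADVn0.
move: aAV bAV; rewrite !inE => /andP[aA aV] /andP[bV bA].
have hb x : x \in A -> h b <= h x.
  move=> xA; case: (boolP (x \in V)) => xV; first exact: hV.
  by apply: bmin; rewrite inE xV xA.
rewrite (@diam_eq_range _ A a b) // ?(@diam_eq_range h A a b) //.
- by rewrite aV (negbTE bV) /= mulr1 mulr0; ring.
- by move=> x xA; rewrite hb // hV.
move=> x xA; rewrite aV (negbTE bV) /= mulr1 mulr0 add0r.
have := hb x xA; have := hV a x aV.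
by case: (x \in V); rewrite /= ?mulr1 ?mulr0 => *; apply/andP; split; lra.
Qed.

Lemma diam_chain (w : {set X} -> R) (L : seq {set X}) A :
  (forall U, 0 <= w U) -> sorted (fun U V => U \subset V) L ->
  diam (fun x => \sum_(U <- L) w U * (x \in U)%:R) A =
  \sum_(U <- L) w U * cut_div R U A.
Proof.
move=> w0; elim: L => [|V L IH] /= sL.
  by rewrite big_nil (@diam_const _ _ 0) // => x _; rewrite big_nil.
have tr : transitive (fun U V : {set X} => U \subset V).
  by move=> ? ? ?; exact: fintype.subset_trans.
have VL := order_path_min tr sL.
rewrite big_cons -IH ?(path_sorted sL) // -diam_add_cut //.
  by apply: eq_in_diam => x _; rewrite big_cons.
move=> x y xV; rewrite big_seq [X in _ <= X]big_seq; apply: ler_sum => U UL.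
by rewrite (fintype.subsetP (allP VL U UL) x xV) ler_wpM2l //; case: (y \in U).
Qed.

End Diameter.

Section CutWeight.
Variables (R : realType) (X : finType).
Implicit Types (f g : X -> R) (A U : {set X}).

(* [abs_mass f] bounds [f] above and [- f] below, so it is a harmless default
   for the extrema over [U] and [~: U] that still depends measurably on [f]. *)
Definition abs_mass f := \sum_x `|f x|.
Definition min_in f U := \big[Num.min/abs_mass f]_(x in U) f x.
Definition max_out f U := \big[Num.max/- abs_mass f]_(x in ~: U) f x.

Definition cut_weight f U :=
  if (U != set0) && (~: U != set0) then Num.max 0 (min_in f U - max_out f U)
  else 0.

Lemma abs_mass_ge f x : `|f x| <= abs_mass f.
Proof. by rewrite /abs_mass (bigD1 x) //= lerDl sumr_ge0. Qed.

Lemma min_in_le f U x : x \in U -> min_in f U <= f x.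
Proof. exact: bigmin_le_cond. Qed.

Lemma max_out_ge f U y : y \notin U -> f y <= max_out f U.
Proof. by move=> yU; apply: le_bigmax_cond; rewrite inE. Qed.

Lemma min_in_eq f U x : x \in U -> (forall z, z \in U -> f x <= f z) ->
  min_in f U = f x.
Proof.
move=> xU xmin; apply/le_anti; rewrite min_in_le //=.
apply: le_bigmin => [|z /xmin //].
exact: le_trans (ler_norm _) (abs_mass_ge f x).
Qed.

Lemma max_out_eq f U y : y \notin U -> (forall z, z \notin U -> f z <= f y) ->
  max_out f U = f y.
Proof.
move=> yU ymax; apply/le_anti; rewrite max_out_ge // andbT.
apply: bigmax_le => [|z]; last by rewrite inE => /ymax.
by rewrite lerNl (le_trans _ (abs_mass_ge f y)) // -normrN ler_norm.
Qed.

Lemma cut_weight_ge0 f U : 0 <= cut_weight f U.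
Proof. by rewrite /cut_weight; case: ifP; rewrite ?le_max ?lexx. Qed.

Lemma cut_weight_eq f U x y : x \in U -> y \notin U ->
  (forall z, z \in U -> f x <= f z) -> (forall z, z \notin U -> f z <= f y) ->
  cut_weight f U = Num.max 0 (f x - f y).
Proof.
move=> xU yU xmin ymax; rewrite /cut_weight.
rewrite (@min_in_eq f U x xU xmin) (@max_out_eq f U y yU ymax).
have -> : U != set0 by apply/set0Pn; exists x.
by have -> : ~: U != set0 by apply/set0Pn; exists y; rewrite inE.
Qed.

Lemma cut_weight_eq0 f U x y : x \in U -> y \notin U -> f x <= f y ->
  cut_weight f U = 0.
Proof.
move=> xU yU fxy; rewrite /cut_weight; case: ifP => // _.
apply/max_idPl; rewrite subr_le0 (le_trans (@min_in_le f U x xU)) //.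
exact: le_trans fxy (@max_out_ge f U y yU).
Qed.

Lemma cut_weight_const f U c : (forall x, f x = c) -> cut_weight f U = 0.
Proof.
move=> fc; have [->|[x xU]] := set_0Vmem U; first by rewrite /cut_weight eqxx.
have [UT|[y]] := set_0Vmem (~: U); first by rewrite /cut_weight UT eqxx andbF.
by rewrite inE => yU; rewrite (@cut_weight_eq0 f U x y) ?fc.
Qed.

Section Truncation.
Variables (f : X -> R) (U0 : {set X}) (a b : X).
Hypotheses (aU0 : a \in U0) (bU0 : b \notin U0) (fba : f b <= f a)
  (fU0 : {in U0, forall x, f x = f a}) (fC : forall x, x \notin U0 -> f x <= f b).

Let g x := Num.min (f x) (f b).

Lemma diam_truncate A : diam f A = (f a - f b) * cut_div R U0 A + diam g A.
Proof.
rewrite -diam_add_cut ?subr_ge0 //; last first.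
  by move=> x y xU0; rewrite /g (fU0 xU0) (min_r fba) ge_min lexx orbT.
apply: eq_in_diam => x _; rewrite /g; have [xU0|xU0] := boolP (x \in U0).
  by rewrite fU0 // (min_r fba) mulr1; ring.
by rewrite min_l ?fC // mulr0 add0r.
Qed.

Lemma cut_weight_truncate U :
  cut_weight f U = cut_weight g U + (U == U0)%:R * (f a - f b).
Proof.
have gE x : f x <= f b -> g x = f x by move=> fxb; rewrite /g min_l.
have gU0 x : x \in U0 -> g x = f b by move=> xU0; rewrite /g fU0 // min_r.
have gb x : g x <= f b by rewrite /g ge_min lexx orbT.
have fa x : f x <= f a.
  by have [/fU0->//|/fC fxb] := boolP (x \in U0); exact: le_trans fxb fba.
rewrite mulr_natl; have [->|UU0] := eqVneq U U0.
  rewrite mulr1n (@cut_weight_eq f U0 a b) ?(@cut_weight_eq g U0 a b) //.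
  - by rewrite gU0 // gE // subrr maxxx add0r max_r // subr_ge0.
  - by move=> z /gU0->; rewrite gU0.
  - by move=> z _; rewrite (gE b) // gb.
  - by move=> z /fU0->.
rewrite mulr0n addr0; have [sU0U|] := boolP (U0 \subset U); last first.
  case/fintype.subsetPn => y yU0 yU.
  have [->|[x xU]] := set_0Vmem U; first by rewrite /cut_weight eqxx.
  have fxy : f x <= f y by rewrite (fU0 yU0).
  have gxy : g x <= g y by rewrite (gU0 y yU0).
  by rewrite (@cut_weight_eq0 f U x y) ?(@cut_weight_eq0 g U x y).
have [x1 x1U x1U0] : exists2 x1, x1 \in U & x1 \notin U0.
  by apply/fintype.subsetPn; apply: contra UU0 => sUU0; rewrite finset.eqEsubset sUU0.
have [UT|[y0 y0U]] := set_0Vmem (~: U); first by rewrite /cut_weight UT eqxx andbF.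
have Un0 : U != set0 by apply/set0Pn; exists x1.
have UCn0 : ~: U != set0 by apply/set0Pn; exists y0.
have [x xU xmin] := @exists_argmin R X f _ Un0.
have [y yU ymax] := @exists_argmax R X f _ UCn0; rewrite inE in yU.
have outU0 z : z \notin U -> z \notin U0.
  by move=> zU; apply: contra zU; exact: (fintype.subsetP sU0U).
have fxb : f x <= f b := le_trans (xmin x1 x1U) (fC x1U0).
have fyb : f y <= f b by rewrite fC ?outU0.
rewrite (@cut_weight_eq f U x y) ?(@cut_weight_eq g U x y) ?(gE x) ?(gE y) //.
- by move=> z zU; rewrite ?(gE x) // /g le_min xmin.
- by move=> z zU; rewrite ?(gE y) // gE ?ymax ?inE // fC ?outU0.
- by move=> z zU; rewrite ymax ?inE.
Qed.

End Truncation.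

(* Induction on the number of points below the maximum: truncating [f] at its
   second largest value peels off the cut at the top level set. *)
Lemma diam_cut_weight f A : diam f A = \sum_U cut_weight f U * cut_div R U A.
Proof.
have [->|[x0 _]] := set_0Vmem A.
  by rewrite diam_set0 big1 // => U _; rewrite /cut_div finset.set0I eqxx mulr0.
have Xn0 : [set: X] != set0 by apply/set0Pn; exists x0; rewrite inE.
have [a _ fa] := @exists_argmax R X f _ Xn0.
have {}fa x : f x <= f a by apply: fa; rewrite inE.
have [k] := ubnP #|[set x | f x < f a]|; elim: k f a fa => // k IHk f a fa.
set C := [set x | f x < f a] => Ck.
have [C0|Cn0] := eqVneq C set0.
  have fcst x : f x = f a.
    apply/le_anti; rewrite fa leNgt; apply/negP => fxa.
    by move/setP/(_ x): C0; rewrite !inE fxa.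
  rewrite (@diam_const R X f A (f a)) // big1 // => U _.
  by rewrite (cut_weight_const _ fcst) mul0r.
have [b bC bmax] := @exists_argmax R X f _ Cn0.
have anC : a \in ~: C by rewrite !inE ltxx.
have bnC : b \notin ~: C by rewrite inE negbK.
have fba : f b < f a by rewrite inE in bC.
have fnC : {in ~: C, forall x, f x = f a}.
  by move=> x; rewrite !inE -leNgt => fax; apply/le_anti; rewrite fa.
have fC x : x \notin ~: C -> f x <= f b by rewrite inE negbK; exact: bmax.
rewrite (@diam_truncate f (~: C) a b (ltW fba) fnC fC) (IHk _ b).
- under [RHS]eq_bigr do
    rewrite (@cut_weight_truncate f (~: C) a b anC bnC (ltW fba) fnC fC) mulrDl.
  rewrite big_split /= addrC; congr (_ + _).
  rewrite (bigD1 (~: C)) //= eqxx mul1r big1 ?addr0 // => U /negbTE->.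
  by rewrite !mul0r.
- by move=> x; rewrite minxx ge_min lexx orbT.
suff /proper_card : [set x | Num.min (f x) (f b) < Num.min (f b) (f b)] \proper C.
  by move: Ck; lia.
rewrite properE; apply/andP; split.
  apply/fintype.subsetP => x; rewrite !inE minxx gt_min ltxx orbF.
  by move/lt_trans; apply.
by apply/fintype.subsetPn; exists b; rewrite // inE minxx ltxx.
Qed.

End CutWeight.

Lemma nneseries_finite (R : realType) (a : nat -> \bar R) m :
  (forall k, 0 <= a k)%E -> (forall k, (m <= k)%N -> a k = 0%E) ->
  (\sum_(k <oo) a k = \sum_(0 <= k < m) a k)%E.
Proof.
move=> a0 am; rewrite (@nneseries_split R a 0 m) => [|k _]; last exact: a0.
by rewrite add0n eseries0 ?adde0 // => k km _; exact: am.
Qed.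

Section Measurable.
Variables (R : realType) (X : finType) (d : measure_display) (T : measurableType d).
Implicit Types (B : T -> R) (F : X -> T -> R) (P : pred X).

Lemma measurable_bigmin B F P :
  measurable_fun setT B -> (forall x, measurable_fun setT (F x)) ->
  measurable_fun setT (fun w => \big[Num.min/B w]_(x | P x) F x w).
Proof.
move=> mB mF; elim: (index_enum X) => [|x r IH]; first by under eq_fun do rewrite big_nil.
by under eq_fun do rewrite big_cons; case: (P x) => //; exact: measurable_minr.
Qed.

Lemma measurable_bigmax B F P :
  measurable_fun setT B -> (forall x, measurable_fun setT (F x)) ->
  measurable_fun setT (fun w => \big[Num.max/B w]_(x | P x) F x w).
Proof.
move=> mB mF; elim: (index_enum X) => [|x r IH]; first by under eq_fun do rewrite big_nil.
by under eq_fun do rewrite big_cons; case: (P x) => //; exact: measurable_maxr.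
Qed.

Lemma measurable_cut_weight (phi : X -> T -> R) U :
  (forall x, measurable_fun setT (phi x)) ->
  measurable_fun setT (fun w => cut_weight (fun x => phi x w) U).
Proof.
move=> mphi; have [HU|HU] := boolP ((U != set0) && (~: U != set0));
  rewrite /cut_weight ?HU ?(negbTE HU); last exact: measurable_cst.
apply: (@measurable_maxr _ _ _ _ (cst 0)
  (fun w => min_in (fun x => phi x w) U - max_out (fun x => phi x w) U)).
  exact: measurable_cst.
have mB : measurable_fun setT (fun w => abs_mass (fun x => phi x w)).
  apply: measurable_sum => x.
  by apply: measurableT_comp; [exact: normr_measurable|exact: mphi].
apply: measurable_funB; first exact: measurable_bigmin.
by apply: measurable_bigmax => //; exact: measurable_funN.
Qed.

End Measurable.

Section L1.
Variables (R : realType) (X : finType).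
Implicit Types (delta : {set X} -> R).

Lemma cut_div_ge0 (U A : {set X}) : 0 <= cut_div R U A.
Proof. by rewrite /cut_div; case: ifP. Qed.

(* The coordinates of [R^m] become the points of [nat] under counting measure. *)
Lemma l1m_embeddable_L1 m delta : l1m_embeddable m delta -> L1_embeddable delta.
Proof.
case=> f fdelta.
pose phi x k : R := \sum_(i < m | (i : nat) == k) f x i.
have phiE x (i : 'I_m) : phi x i = f x i by rewrite /phi (big_pred1 i).
have phi0 x k : (m <= k)%N -> phi x k = 0.
  move=> mk; rewrite /phi big_pred0 // => i.
  by apply/negbTE/eqP => ik; move: (ltn_ord i); rewrite ik ltnNge mk.
exists default_measure_display, nat, counting, phi; split.
  move=> x; apply/integrableP; split; first by move=> _ Y _; exact: I.
  rewrite ge0_integral_count // (@nneseries_finite _ _ m) => [|//|k mk].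
    by under eq_bigr do rewrite abse_EFin; rewrite sumEFin ltry.
  by rewrite phi0 // abse0.
move=> A; rewrite ge0_integral_count => [|k]; last by rewrite lee_fin diam_ge0.
rewrite (@nneseries_finite _ _ m) => [|k|k mk]; last 2 first.
- by rewrite lee_fin diam_ge0.
- by rewrite (@diam_const _ _ _ A 0) // => x _; exact: phi0.
rewrite fdelta -sumEFin big_mkord; apply: eq_bigr => i _; congr EFin.
by apply: eq_in_diam => x _; rewrite phiE.
Qed.

Lemma L1_embeddable_cut_sum delta : L1_embeddable delta ->
  exists lam : {set X} -> R, (forall U, 0 <= lam U) /\
    forall A, delta A = \sum_U lam U * cut_div R U A.
Proof.
case=> d [T [mu [phi [phi_int phi_delta]]]].
have mphi x : measurable_fun setT (phi x).
  by apply/measurable_EFinP; exact: measurable_int (phi_int x).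
pose I U := (\int[mu]_(w in setT) (cut_weight (fun x => phi x w) U)%:E)%E.
have I0 U : (0 <= I U)%E by apply: integral_ge0 => w _; rewrite lee_fin cut_weight_ge0.
have deltaE A : (delta A)%:E = (\sum_U I U * (cut_div R U A)%:E)%E.
  rewrite phi_delta; under eq_integral => w _ do rewrite diam_cut_weight -sumEFin.
  rewrite ge0_integral_sum // => [|U|U w _]; last first.
  - by rewrite lee_fin mulr_ge0 ?cut_weight_ge0 ?cut_div_ge0.
  - apply/measurable_EFinP/measurable_funM; last exact: measurable_cst.
    exact: measurable_cut_weight.
  apply: eq_bigr => U _; rewrite /cut_div; case: ifP => _.
    by under eq_integral do rewrite mulr1; rewrite mule1.
  by rewrite mule0 integral0_eq // => w _; rewrite mulr0.
exists (fun U => fine (I U)); split => [U|A]; first exact: fine_ge0.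
have termE U : (fine (I U) * cut_div R U A)%:E = (I U * (cut_div R U A)%:E)%E.
  rewrite /cut_div; case: ifP => cutU; last by rewrite !mulr0 mule0.
  rewrite mulr1 mule1 fineK // ge0_fin_numE // (le_lt_trans _ (ltry (delta A))) //.
  rewrite deltaE (bigD1 U) //= /cut_div cutU mule1 leeDl // sume_ge0 // => V _.
  by rewrite mule_ge0 // lee_fin cut_div_ge0.
by apply/EFin_inj; rewrite deltaE -sumEFin; apply: eq_bigr => U _; rewrite termE.
Qed.

End L1.

Section SymmetricChains.
Variables (R : realType) (X : finType).
Implicit Types (a : X) (B G U : {set X}) (e s : seq X) (F : {set X} -> R).
Implicit Type c : {set X} * seq X.

(* The pair [(B, s)] encodes the chain [B], [B ∪ {s_0}], ..., [B ∪ s]. *)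
Definition chain_sets c : seq {set X} :=
  [seq c.1 :|: [set x in take j c.2] | j <- index_iota 0 (size c.2).+1].

Lemma sum_chain_sets F c : \sum_(U <- chain_sets c) F U =
  \sum_(0 <= j < (size c.2).+1) F (c.1 :|: [set x in take j c.2]).
Proof. by rewrite big_map. Qed.

Lemma sorted_chain_sets c : sorted (fun U V : {set X} => U \subset V) (chain_sets c).
Proof.
rewrite sorted_map; apply: (sub_sorted _ (iota_sorted 0 _)) => i j ij /=.
apply: finset.setUS; apply/fintype.subsetP => x; rewrite !inE.
by rewrite -(take_takel c.2 ij) => /mem_take.
Qed.

(* de Bruijn's construction: a chain [C_0 ⊂ ... ⊂ C_k] of subsets of [e]
   yields the chains [C_0 ⊂ ... ⊂ C_k ⊂ a |: C_k] and
   [a |: C_0 ⊂ ... ⊂ a |: C_(k-1)] of subsets of [a :: e]. *)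
Definition extend_chain a c : seq ({set X} * seq X) :=
  (c.1, rcons c.2 a) ::
  (if c.2 is [::] then [::] else [:: (a |: c.1, take (size c.2).-1 c.2)]).

Lemma sum_extend_chain F a c :
  \sum_(c' <- extend_chain a c) \sum_(U <- chain_sets c') F U =
  \sum_(U <- chain_sets c) F U + \sum_(U <- chain_sets c) F (a |: U).
Proof.
case: c => B s; rewrite /extend_chain big_cons.
have long : \sum_(U <- chain_sets (B, rcons s a)) F U =
    \sum_(0 <= j < (size s).+1) F (B :|: [set x in take j s]) +
    F (a |: (B :|: [set x in s])).
  rewrite sum_chain_sets size_rcons big_nat_recr //= take_oversize ?size_rcons //.
  have -> : [set x in rcons s a] = a |: [set x in s].
    by apply/setP => x; rewrite !inE mem_rcons inE.
  rewrite finset.setUCA; congr (_ + _); apply: eq_big_nat => j /andP[_ js].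
  by rewrite -cats1 takel_cat.
have short : \sum_(c' <- if s is [::] then [::]
                        else [:: (a |: B, take (size s).-1 s)])
      \sum_(U <- chain_sets c') F U =
    \sum_(0 <= j < size s) F (a |: (B :|: [set x in take j s])).
  case: s {long} => [|z s]; first by rewrite big_nil big_geq.
  rewrite big_seq1 sum_chain_sets /= size_takel //; apply: eq_big_nat => j /andP[_ js].
  by rewrite take_takel // finset.setUA.
rewrite long short !sum_chain_sets [X in _ = _ + X]big_nat_recr //= take_size.
by rewrite -addrA [F _ + _]addrC.
Qed.

Lemma sum_subsets_setU1 F a G : a \notin G ->
  \sum_(U : {set X} | U \subset a |: G) F U =
  \sum_(U : {set X} | U \subset G) F U + \sum_(U : {set X} | U \subset G) F (a |: U).
Proof.
move=> aG; rewrite (bigID (fun U : {set X} => a \in U)) /= addrC; congr (_ + _).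
  apply: eq_bigl => U; apply/andP/idP => [[sU aU]|sU].
    apply/fintype.subsetP => x xU; have := fintype.subsetP sU x xU.
    by rewrite !inE => /orP[/eqP xa|//]; move: aU; rewrite -xa xU.
  split; last by apply: contra aG => aU; exact: (fintype.subsetP sU).
  exact: fintype.subset_trans sU (finset.subsetU1 _ _).
rewrite (reindex_onto (fun U => a |: U) (fun U => U :\ a)) /=; last first.
  by move=> U /andP[_ aU]; rewrite finset.setD1K.
apply: eq_bigl => U; apply/idP/idP => [/andP[/andP[sU _] /eqP UE]|sU].
  have aU : a \notin U by rewrite -UE !inE eqxx.
  apply/fintype.subsetP => x xU; have := fintype.subsetP sU x.
  by rewrite !inE xU orbT => /(_ isT) /orP[/eqP xa|//]; move: aU; rewrite -xa xU.
have aU : a \notin U by apply: contra aG => aU; exact: (fintype.subsetP sU).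
by rewrite finset.setU11 andbT finset.setU1K // eqxx andbT (finset.setUS _ sU).
Qed.

(* [(B, s)] is a symmetric chain of subsets of [e]: its ranks run from
   [#|B|] up to [size e - #|B|]. *)
Definition symmetric_chain e c :=
  [/\ uniq c.2, {in c.2, forall x, x \notin c.1}, {subset c.1 <= e},
      {subset c.2 <= e} & (2 * #|c.1| + size c.2 = size e)%N].

Lemma extend_chain_symmetric a e c : a \notin e -> symmetric_chain e c ->
  {in extend_chain a c, forall c', symmetric_chain (a :: e) c'}.
Proof.
move=> ae; case: c => B s [/= us sB Be se sizeBs] c'.
have aB : a \notin B by apply: contra ae => /Be.
have aS : a \notin s by apply: contra ae => /se.
rewrite inE => /orP[/eqP->|]; first split => /=.
- by rewrite rcons_uniq aS us.
- by move=> x; rewrite mem_rcons inE => /orP[/eqP->//|/sB].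
- by move=> x /Be xe; rewrite inE xe orbT.
- by move=> x; rewrite mem_rcons !inE => /orP[->//|/se->]; rewrite orbT.
- by rewrite size_rcons /= addnS sizeBs.
case: s us sB se sizeBs aS => [|z s] us sB se sizeBs aS; first by rewrite inE.
rewrite inE => /eqP->; split => /=.
- exact: take_uniq.
- move=> x /mem_take xs; rewrite !inE negb_or sB // andbT.
  by apply: contraNneq ae => <-; exact: se.
- by move=> x; rewrite !inE => /orP[->//|/Be->]; rewrite orbT.
- by move=> x /mem_take /se xe; rewrite inE xe orbT.
- by rewrite finset.cardsU1 aB size_takel //; move: sizeBs => /=; lia.
Qed.

(* Every subset of [e] occurs exactly once among the sets of the chains of [D]. *)
Definition chain_partition e (D : seq ({set X} * seq X)) :=
  forall F, \sum_(c <- D) \sum_(U <- chain_sets c) F U =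
            \sum_(U : {set X} | U \subset [set x in e]) F U.

Lemma symmetric_chain_decomposition e : uniq e ->
  exists2 D, chain_partition e D & {in D, forall c, symmetric_chain e c}.
Proof.
elim: e => [_|a e IHe].
  exists [:: (set0, [::])] => [F|c]; last first.
    by rewrite inE => /eqP->; split => //= [x|]; rewrite ?inE ?finset.cards0.
  rewrite big_seq1 sum_chain_sets big_nat1 /= finset.setU0 (big_pred1 set0) // => U.
  by rewrite finset.set_nil finset.subset0.
rewrite cons_uniq => /andP[ae ue]; have [D DP Dsym] := IHe ue.
exists (flatten [seq extend_chain a c | c <- D]) => [F|c'].
  rewrite big_flatten big_map; under eq_bigr do rewrite sum_extend_chain.
  rewrite big_split /= DP (DP (fun U => F (a |: U))) finset.set_cons.
  by rewrite sum_subsets_setU1 // inE.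
case/flattenP => cs /mapP[c cD ->]; exact: (extend_chain_symmetric ae (Dsym c cD)).
Qed.

Lemma symmetric_chain_middle e c : symmetric_chain e c ->
  exists2 U, U \in chain_sets c & #|U| = (size e)./2.
Proof.
case: c => B s [/= us sB _ _ sizeBs].
pose j := ((size e)./2 - #|B|)%N.
have js : (j <= size s)%N by rewrite /j -sizeBs; lia.
exists (B :|: [set x in take j s]).
  by apply/mapP; exists j; rewrite ?mem_index_iota.
have disj : B :&: [set x in take j s] = set0.
  apply/setP => x; rewrite !inE; apply/negbTE/andP => -[xB /mem_take xs].
  by move: (sB x xs); rewrite xB.
rewrite finset.cardsU disj finset.cards0 subn0 cardsE (card_uniqP (take_uniq _ us)).
by rewrite size_takel // /j -sizeBs; lia.
Qed.

Lemma size_chain_partition D : chain_partition (enum X) D ->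
  {in D, forall c, symmetric_chain (enum X) c} -> (size D <= 'C(#|X|, #|X|./2))%N.
Proof.
move=> DP Dsym; pose F U : R := (#|U| == #|X|./2)%:R.
have subsetsE : \sum_(U : {set X} | U \subset [set x in enum X]) F U =
    'C(#|X|, #|X|./2)%:R.
  rewrite (eq_bigl xpredT) => [|U]; last first.
    by apply/fintype.subsetP => x _; rewrite inE mem_enum.
  rewrite -card_draws -sum1_card natr_sum [RHS]big_mkcond; apply: eq_bigr => U _.
  by rewrite inE /F; case: (_ == _).
rewrite -(ler_nat R) -subsetsE -DP -sum1_size natr_sum big_seq [X in _ <= X]big_seq.
apply: ler_sum => c /Dsym /symmetric_chain_middle [U Uc sizeU].
rewrite (perm_big _ (perm_to_rem Uc)) big_cons /F sizeU -cardE eqxx lerDl.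
by apply: sumr_ge0 => V _; rewrite ler0n.
Qed.

Lemma cut_sum_l1m_embeddable delta (lam : {set X} -> R) :
  (forall U, 0 <= lam U) -> (forall A, delta A = \sum_U lam U * cut_div R U A) ->
  exists m, (m <= 'C(#|X|, #|X|./2))%N /\ l1m_embeddable m delta.
Proof.
move=> lam0 deltaE.
have [D DP Dsym] := symmetric_chain_decomposition (enum_uniq X).
exists (size D); split; first exact: size_chain_partition.
pose c0 : {set X} * seq X := (set0, [::]).
exists (fun x i => \sum_(U <- chain_sets (nth c0 D i)) lam U * (x \in U)%:R) => A.
under [RHS]eq_bigr do rewrite (@diam_chain _ _ lam _ A lam0 (sorted_chain_sets _)).
pose G c := \sum_(U <- chain_sets c) lam U * cut_div R U A.
rewrite (_ : \sum_(i < size D) _ = \sum_(c <- D) G c); last first.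
  by rewrite (big_nth c0) big_mkord.
rewrite DP deltaE; apply: eq_bigl => U.
by apply/esym/fintype.subsetP => x _; rewrite inE mem_enum.
Qed.

End SymmetricChains.

Theorem proposition9 (R : realType) (X : finType) (n : nat) (delta : {set X} -> R) :
  diversity delta -> #|X| = n ->
  (L1_embeddable delta <->
     exists m : nat, (m <= 'C(n, n./2))%N /\ l1m_embeddable m delta) /\
  ((exists m : nat, (m <= 'C(n, n./2))%N /\ l1m_embeddable m delta) <->
     exists lam : {set X} -> R, (forall U, 0 <= lam U) /\
       forall A, delta A = \sum_(U : {set X}) lam U * cut_div R U A).
Proof.
move=> _ <-; split; split.
- case/L1_embeddable_cut_sum => lam [lam0 deltaE].
  exact: cut_sum_l1m_embeddable lam0 deltaE.
- by case=> m [_ /l1m_embeddable_L1].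
- by case=> m [_ /l1m_embeddable_L1 /L1_embeddable_cut_sum].
- by case=> lam [lam0 deltaE]; exact: cut_sum_l1m_embeddable lam0 deltaE.
Qed.
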